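(* For every graph $G$, $\mathrm{cop}(G^+)\ge \mathrm{cop}(G)$; that is, clique substitution does not decrease the cop number.
   Context: All graphs are finite, undirected, without loops or multiple edges; $N(v)$ is the set of neighbours of $v$. Clique substitution at a vertex $v$ replaces $v$ by a clique of size $|N(v)|$ and adds a perfect matching between the vertices of this clique and $N(v)$. $G^+$ is the graph obtained from $G$ by clique substitution at every vertex: formally $V(G^+)=\bigcup_{v\in V(G)}(\{v\}\times N(v))$, and $(v_1,u_1)$, $(v_2,u_2)$ are adjacent iff $v_1=v_2$, or $v_1=u_2$ and $u_1=v_2$. Cops and Robber game on a connected graph: for an integer $k\ge 1$, the cop player places $k$ cops on (not necessarily distinct) vertices, then the robber is placed on a vertex; then, starting with the cops, the players alternate moves. In a cop move, each cop either stays or moves to an adjacent vertex; in a robber move, the robber stays or moves to an adjacent vertex. The cops win if at some point a cop and the robber occupy the same vertex. Both players have complete information. The cop number $\mathrm{cop}(G)$ of a connected graph $G$ is the smallest $k$ such that the cops have a winning strategy with $k$ cops; for a non-connected graph it is the maximum cop number of its connected components. *)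

From mathcomp Require Import all_boot.
From mathcomp Require Import boolp.

Set Implicit Arguments.
Unset Strict Implicit.
Unset Printing Implicit Defensive.

(* A (finite simple) graph is given by a vertex type T : finType and an
   adjacency relation e : rel T, assumed symmetric and irreflexive in the
   theorem statement. *)

(** Clique substitution G^+ : vertices are pairs (v,u) with u in N(v);
    (v1,u1) ~ (v2,u2) iff they are distinct and (v1 = v2, or v1 = u2 and
    u1 = v2). *)
Definition cs_vert (T : finType) (e : rel T) : finType :=
  {p : T * T | e p.1 p.2}.

Definition cs_adj (T : finType) (e : rel T) : rel (cs_vert e) :=
  fun p q => (p != q) &&
    (((val p).1 == (val q).1) || (((val p).1 == (val q).2) && ((val p).2 == (val q).1))).

(** The Cops and Robber game with k cops.
    [cwin e k b c r] : the cops can force a capture from the position where the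
    cops are at c, the robber at r, and it is the cops' turn iff b = true.
    (Least fixed point = cops win in finitely many moves = winning strategy
    in this finite reachability game.) *)
Inductive cwin (T : finType) (e : rel T) (k : nat) :
    bool -> {ffun 'I_k -> T} -> T -> Prop :=
| cw_cap b (c : {ffun 'I_k -> T}) r :
    (exists i, c i = r) -> cwin e b c r
| cw_cop (c c' : {ffun 'I_k -> T}) r :
    (forall i, c' i = c i \/ e (c i) (c' i)) ->
    cwin e false c' r -> cwin e true c r
| cw_rob (c : {ffun 'I_k -> T}) r :
    (forall r', r' = r \/ e r r' -> cwin e true c r') -> cwin e false c r.

Definition cops_win_on (T : finType) (e : rel T) (C : {set T}) (k : nat) : Prop :=
  exists c : {ffun 'I_k -> T},
    (forall i, c i \in C) /\ forall r, r \in C -> cwin e true c r.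

(** Cop number of a connected component C: least k >= 1 such that k cops win.
    Since #|C| <= #|T| cops always win (one on each vertex), the minimum over
    k < #|T|.+2 is the true minimum. *)
Definition copnum_comp (T : finType) (e : rel T) (C : {set T}) : nat :=
  \big[minn/#|T|.+1]_(k < #|T|.+2 | `[< (1 <= k)%N /\ cops_win_on e C k >]) (k : nat).

(** Cop number of a graph: maximum over its connected components
    (0 for the empty graph). *)
Definition copnum (T : finType) (e : rel T) : nat :=
  \max_(x : T) copnum_comp e [set y | connect e x y].

From mathcomp Require Import all_boot all_order boolp.

Set Implicit Arguments.
Unset Strict Implicit.
Unset Printing Implicit Defensive.

Import Order.TTheory.

(* A robber who survives in G also survives in G^+.  Project every vertex
   (v, u) of G^+ to v.  A G^+-move changes the projection by at most one
   G-edge, and so do two consecutive G^+-moves, because both stay inside the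
   edge {v, u}; hence the cops of G^+ are shadowed by cops of G that play at
   half speed.  The G^+-robber keeps the position of the G-robber as an
   endpoint of his vertex (v, u): on a G-move to r' he steps into the clique
   of v to (v, r'), and on the next round crosses the matching edge to
   (r', v).  A capture in G^+ would put a shadow cop on or next to the
   G-robber, who would then have been caught in G. *)

Definition game_move (U : Type) (f : rel U) (x y : U) : Prop := y = x \/ f x y.

Definition cops_move (U : Type) (f : rel U) k (c c' : {ffun 'I_k -> U}) : Prop :=
  forall i, game_move f (c i) (c' i).

Section Game.

Variables (U : finType) (f : rel U).

Lemma cops_move_refl k (c : {ffun 'I_k -> U}) : cops_move f c c.
Proof. by move=> i; left. Qed.

Lemma cwin_near k (c : {ffun 'I_k -> U}) r i : game_move f (c i) r -> cwin f true c r.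
Proof.
case=> [->|cr]; first by apply: cw_cap; exists i.
apply: (@cw_cop _ _ _ c [ffun j => if j == i then r else c j]).
  by move=> j; rewrite ffunE; case: eqP => [->|_]; [right | left].
by apply: cw_cap; exists i; rewrite ffunE eqxx.
Qed.

Lemma robber_escapes k (c : {ffun 'I_k -> U}) r :
  ~ cwin f false c r -> exists2 r', game_move f r r' & ~ cwin f true c r'.
Proof.
move=> lost; apply: contrapT => trapped; apply: lost; apply: cw_rob => r' rr'.
by apply: contrapT => safe; apply: trapped; exists r'.
Qed.

Lemma connect_game_move x y : game_move f x y -> connect f x y.
Proof. by case=> [-> | /connect1]. Qed.

Lemma cops_win_on_card (C : {set U}) x0 k :
  x0 \in C -> #|C| <= k -> cops_win_on f C k.
Proof.
move=> Cx0 Ck; exists [ffun i : 'I_k => nth x0 (enum C) i]; split.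
  move=> i; rewrite ffunE; case: (ltnP i (size (enum C))) => [lt_i|le_i].
    by rewrite -mem_enum mem_nth.
  by rewrite nth_default.
move=> r Cr; apply: cw_cap.
have lt_r : index r (enum C) < k by rewrite (leq_trans _ Ck) // cardE index_mem mem_enum.
by exists (Ordinal lt_r); rewrite ffunE nth_index ?mem_enum.
Qed.

Lemma cops_win_on_isolated x :
  f x =1 xpred0 -> cops_win_on f [set y | connect f x y] 1.
Proof.
move=> isolated; apply: (@cops_win_on_card _ x); first by rewrite inE connect0.
rewrite -(cards1 x); apply/subset_leq_card/subsetP => y.
rewrite !inE => /connectP [[|z s] /= + ->] //.
by rewrite isolated.
Qed.

Lemma copnum_comp_le (C : {set U}) j :
  0 < j -> cops_win_on f C j -> copnum_comp f C <= j.
Proof.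
move=> j_gt0 win; rewrite /copnum_comp -minEnat.
case: (ltnP j #|U|.+2) => [lt_j|le_j].
  by apply: (@bigmin_inf _ nat _ _ (Ordinal lt_j)) => //; apply/asboolP.
apply: leq_trans (ltnW le_j); exact: (@bigmin_le_id _ nat).
Qed.

Lemma copnum_comp_component_wins x (C := [set y | connect f x y]) :
  0 < copnum_comp f C /\ cops_win_on f C (copnum_comp f C).
Proof.
have Cx : x \in C by rewrite inE connect0.
have card_gt0 : 0 < #|U| by apply/card_gt0P; exists x.
have lt_card : #|U| < #|U|.+2 by [].
rewrite /copnum_comp -minEnat.
have [||k /asboolP [k_gt0 win] ->] := @eq_bigmin _ nat _ #|U|.+1 (Ordinal lt_card)
  (fun k => `[< 0 < k /\ cops_win_on f C k >]) (fun k => k : nat).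
- by apply/asboolP; split => //; apply: cops_win_on_card Cx (max_card _).
- by move=> k _; rewrite leEnat -ltnS.
- by [].
Qed.

End Game.

Section CliqueSubstitution.

Variables (T : finType) (e : rel T).
Hypothesis e_sym : symmetric e.

Local Notation V := (cs_vert e).
Local Notation adj := (@cs_adj T e).

Definition cs_head (p : V) : T := (val p).1.

Definition cs_end (p : V) (x : T) : bool := ((val p).1 == x) || ((val p).2 == x).

Definition cs_vertex x y (xy : e x y) : V := exist _ (x, y) xy.

Definition proj_cops k (cp : {ffun 'I_k -> V}) : {ffun 'I_k -> T} :=
  [ffun i => cs_head (cp i)].

Lemma cs_adjC : symmetric adj.
Proof.
move=> p q; rewrite /cs_adj eq_sym; congr (_ && (_ || _)); first by rewrite eq_sym.
by rewrite andbC eq_sym [(val q).2 == _]eq_sym.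
Qed.

Lemma cs_move_sym p q : game_move adj p q -> game_move adj q p.
Proof. by case=> [->|pq]; [left | right; rewrite cs_adjC]. Qed.

Lemma cs_moveI p q :
  (val q).1 = (val p).1 \/ (val q).1 = (val p).2 /\ (val q).2 = (val p).1 ->
  game_move adj p q.
Proof.
move=> qp; case: (eqVneq q p) => [-> | neq_qp]; first by left.
right; rewrite /cs_adj eq_sym neq_qp /=.
by case: qp => [-> | [-> ->]]; rewrite !eqxx ?orbT.
Qed.

Lemma cs_end_head p : cs_end p (cs_head p).
Proof. by rewrite /cs_end eqxx. Qed.

Lemma cs_move_end p q : game_move adj p q -> cs_end q (cs_head p).
Proof.
rewrite /cs_end /cs_head.
by case=> [-> | /andP [_ /orP [/eqP -> | /andP [/eqP -> _]]]]; rewrite eqxx ?orbT.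
Qed.

Lemma cs_end_move p x y : cs_end p x -> cs_end p y -> game_move e x y.
Proof.
have p12 : e (val p).1 (val p).2 := valP p.
by case/orP=> /eqP <- /orP [] /eqP <-; [left | right | right; rewrite e_sym | left].
Qed.

(* Two G^+-moves stay within the edge of the intermediate vertex. *)
Lemma cs_move2_head p q s :
  game_move adj p q -> game_move adj q s -> game_move e (cs_head p) (cs_head s).
Proof.
by move=> pq qs; apply: cs_end_move (cs_move_end pq) (cs_move_end (cs_move_sym qs)).
Qed.

Lemma cs_move_head p q : game_move adj p q -> game_move e (cs_head p) (cs_head q).
Proof. by move=> pq; apply: cs_move2_head pq _; left. Qed.

Lemma proj_cops_move2 k (cp0 cp1 cp2 : {ffun 'I_k -> V}) :
  cops_move adj cp0 cp1 -> cops_move adj cp1 cp2 ->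
  cops_move e (proj_cops cp0) (proj_cops cp2).
Proof. by move=> mv01 mv12 i; rewrite !ffunE; apply: cs_move2_head (mv01 i) (mv12 i). Qed.

Lemma cs_move_flip p : exists2 q, game_move adj p q & cs_head q = (val p).2.
Proof.
have p21 : e (val p).2 (val p).1 by rewrite e_sym; apply: (valP p).
by exists (cs_vertex p21) => //; apply: cs_moveI; right.
Qed.

Lemma cs_move_lift p r :
  game_move e (cs_head p) r -> exists2 q, game_move adj p q & cs_end q r.
Proof.
case=> [-> | pr]; first by exists p; [left | apply: cs_end_head].
by exists (cs_vertex pr); [apply: cs_moveI; left | rewrite /cs_end eqxx orbT].
Qed.

Lemma cs_connectE p q : connect adj p q = connect e (cs_head p) (cs_head q).
Proof.
apply/idP/idP => /connectP [s path_s last_s].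
  rewrite {q}last_s; elim: s p path_s => [|q s IHs] p /=; first by rewrite connect0.
  case/andP=> pq /IHs; apply: connect_trans.
  by apply: connect_game_move; apply: cs_move_head; right.
elim: s p path_s last_s => [|x s IHs] p /=.
  by move=> _ head_q; apply/connect_game_move/cs_moveI; left.
case/andP=> px path_s last_s.
have p_px : game_move adj p (cs_vertex px) by apply: cs_moveI; left.
have [p1 px_p1 head_p1] := cs_move_flip (cs_vertex px).
apply: connect_trans (connect_game_move p_px) _.
by apply: connect_trans (connect_game_move px_p1) (IHs p1 _ _); rewrite head_p1.
Qed.

(* The invariant of the shadow game, for the G^+-cops at [cp] and the
   G^+-robber at [p].  When the cops are to move, either they made one move
   since the shadow cops were at [proj_cops cp0] and the G-robber sits at the
   head of [p], or the shadow cops are at [proj_cops cp] and the G-robber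
   sits at the other endpoint of [p]; in both cases the G-robber, with the
   shadow cops to move, is not caught. *)
Definition robber_shadowed k (cp : {ffun 'I_k -> V}) (p : V) : Prop :=
  (exists2 cp0, cops_move adj cp0 cp & ~ cwin e true (proj_cops cp0) (cs_head p))
  \/ ~ cwin e true (proj_cops cp) (val p).2.

Definition shadowed k (b : bool) (cp : {ffun 'I_k -> V}) (p : V) : Prop :=
  if b then robber_shadowed cp p
  else exists2 cp0, cops_move adj cp0 cp & robber_shadowed cp0 p.

Lemma robber_shadowed_end k (cp : {ffun 'I_k -> V}) p r :
  cs_end p r -> ~ cwin e true (proj_cops cp) r -> robber_shadowed cp p.
Proof.
by case/orP=> /eqP <- safe; [left; exists cp; first exact: cops_move_refl | right].
Qed.

Lemma shadowed_uncaught k b (cp : {ffun 'I_k -> V}) p i :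
  shadowed b cp p -> cp i <> p.
Proof.
move=> shadow cpi.
have near cp0 r : cops_move adj cp0 cp -> cs_end p r ->
    game_move e (proj_cops cp0 i) r.
  by move=> mv pr; rewrite ffunE; apply: cs_end_move _ pr; rewrite -cpi; apply: cs_move_end.
case: b shadow => [[[cp0 mv safe] | safe] | [cp0 mv0 [[cp00 mv00 safe] | safe]]]; apply: safe.
- exact: cwin_near (near _ _ mv (cs_end_head p)).
- by apply: cwin_near (near _ (val p).2 (cops_move_refl adj cp) _); rewrite /cs_end eqxx orbT.
- apply: cw_cop (proj_cops_move2 mv00 mv0) _.
  by apply: cw_cap; exists i; rewrite ffunE cpi.
- by apply: cwin_near (near _ (val p).2 mv0 _); rewrite /cs_end eqxx orbT.
Qed.

Lemma shadowed_escape k (cp : {ffun 'I_k -> V}) p :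
  shadowed false cp p -> exists2 q, game_move adj p q & shadowed true cp q.
Proof.
case=> cp0 mv0 [[cp00 mv00 safe] | safe].
  have lost : ~ cwin e false (proj_cops cp) (cs_head p).
    by move=> win; apply: safe (cw_cop (proj_cops_move2 mv00 mv0) win).
  have [r pr safe_r] := robber_escapes lost.
  have [q pq qr] := cs_move_lift pr.
  by exists q => //; apply: robber_shadowed_end qr safe_r.
have [q pq head_q] := cs_move_flip p.
by exists q => //; left; exists cp0; rewrite // head_q.
Qed.

Lemma cwin_unshadowed k b (cp : {ffun 'I_k -> V}) p :
  cwin adj b cp p -> ~ shadowed b cp p.
Proof.
elim=> {b cp p} [b cp p [i cpi] | cp cp' p mv _ IH shadow | cp p _ IH shadow].
- by move=> shadow; apply: shadowed_uncaught shadow cpi.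
- by apply: IH; exists cp.
- by have [q pq] := shadowed_escape shadow; apply: IH.
Qed.

Lemma connect_neighbor (p : V) r : connect e (cs_head p) r -> exists z, e r z.
Proof.
rewrite (sym_connect_sym e_sym) => /connectP [[|z s] /= path_s head_p].
  by rewrite -head_p; exists (val p).2; apply: (valP p).
by case/andP: path_s => rz _; exists z.
Qed.

Lemma cops_win_on_proj (p0 : V) k :
  cops_win_on adj [set q | connect adj p0 q] k ->
  cops_win_on e [set y | connect e (cs_head p0) y] k.
Proof.
move=> [cp [cpC win]]; exists (proj_cops cp); split.
  by move=> i; have := cpC i; rewrite !inE ffunE cs_connectE.
move=> r; rewrite inE => p0r; apply: contrapT => safe.
have [z rz] := connect_neighbor p0r.
have /cwin_unshadowed : cwin adj true cp (cs_vertex rz).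
  by apply: win; rewrite inE cs_connectE.
by apply; left; exists cp; first exact: cops_move_refl.
Qed.

End CliqueSubstitution.

Theorem lemma7 (T : finType) (e : rel T)
    (e_sym : symmetric e) (e_irr : irreflexive e)
    (e_edge : exists x y, e x y) :
  copnum e <= copnum (@cs_adj T e).
Proof.
have [x0 [y0 xy0]] := e_edge.
rewrite /copnum; apply/bigmax_leqP => x _.
case: (pickP (e x)) => [y xy | isolated].
  have [pos win] := copnum_comp_component_wins (@cs_adj T e) (cs_vertex xy).
  apply: leq_trans (leq_bigmax (cs_vertex xy)).
  exact: copnum_comp_le pos (cops_win_on_proj e_sym win).
apply: leq_trans (copnum_comp_le (ltnSn 0) (cops_win_on_isolated isolated)) _.
have [pos _] := copnum_comp_component_wins (@cs_adj T e) (cs_vertex xy0).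
apply: leq_trans pos _; exact: (leq_bigmax (cs_vertex xy0)).
Qed.
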